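(* Let $(k,|\cdot|)$ be an algebraically closed complete metrized field, $\mathbb{D}=\{|t|<1\}\subset k$, and let $P_t(z)=z^d+\alpha_1(t)z^{d-1}+\cdots+\alpha_d(t)$ with $d\ge2$ and $\alpha_i\in\mathcal{O}(\mathbb{D})[t^{-1}]$ (a meromorphic family of monic polynomials). Then there exist a constant $C>0$ and an integer $N\ge1$ such that the following holds: for every meromorphic function of the form $a(t)=t^{-l}(1+h(t))$ with $l\ge N$ an integer and $h$ analytic on $\mathbb{D}$ with $h(0)=0$ and $\sup_{\mathbb{D}}|h|\le\frac12$, one has $$\left|\frac1d\log|P_t(a(t))|-\log|a(t)|\right|\le C\quad\text{for all }0<|t|\le\tfrac12.$$
   Context: $\mathcal{O}(\mathbb{D})$ is the ring of analytic functions on $\mathbb{D}$ (power series converging on every disk of radius $\rho<1$); $\mathcal{O}(\mathbb{D})[t^{-1}]$ are meromorphic functions on $\mathbb{D}$ with poles only at $0$. *)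

From mathcomp Require Import all_boot all_order all_algebra.
From mathcomp Require Import reals exp.
Set Implicit Arguments. Unset Strict Implicit. Unset Printing Implicit Defensive.
Import Order.TTheory GRing.Theory Num.Theory.
Local Open Scope ring_scope.

Section ValuedField.
Variables (R : realType) (k : fieldType) (abs : k -> R).

Definition abs_value : Prop :=
  [/\ (forall x, 0 <= abs x),
      (forall x, abs x = 0 <-> x = 0),
      (forall x y, abs (x * y) = abs x * abs y) &
      (forall x y, abs (x + y) <= abs x + abs y)].

Definition converges_to (u : nat -> k) (l : k) : Prop :=
  forall e : R, 0 < e -> exists N : nat, forall n, (N <= n)%N -> abs (u n - l) < e.

Definition cauchy_seq (u : nat -> k) : Prop :=
  forall e : R, 0 < e -> exists N : nat,
    forall m n, (N <= m)%N -> (N <= n)%N -> abs (u m - u n) < e.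

Definition complete_abs : Prop :=
  forall u, cauchy_seq u -> exists l, converges_to u l.

(* f is in O(D): f is given on D = {|t| < 1} by a power series converging
   on every disk of radius rho < 1. *)
Definition analytic_D (f : k -> k) : Prop :=
  exists c : nat -> k,
    (forall rho : R, 0 < rho < 1 -> exists M : R, forall n, abs (c n) * rho ^+ n <= M)
    /\ (forall t, abs t < 1 -> converges_to (fun n => \sum_(i < n) c i * t ^+ i) (f t)).

Definition meromorphic_D0 (f : k -> k) : Prop :=
  exists (m : nat) (g : k -> k), analytic_D g /\
    (forall t, 0 < abs t < 1 -> f t = g t / t ^+ m).

End ValuedField.

From mathcomp Require Import all_boot all_order all_algebra.
From mathcomp Require Import reals exp ring lra.
Set Implicit Arguments. Unset Strict Implicit. Unset Printing Implicit Defensive.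
Import Order.TTheory GRing.Theory Num.Theory.
Local Open Scope ring_scope.

(* The coefficients alpha_i have poles of order at
   most m at 0, so |alpha_i t| <= K |t|^-m for 0 < |t| <= 1/2, whereas
   |a| >= |t|^-l / 2.  Once l - m is so large that 2^(l - m) >= 4 d K, each
   lower term alpha_i(t) a^(d-i) of P_t(a) is at most |a|^d / (2 d), hence
   |a|^d / 2 <= |P_t(a)| <= 3 |a|^d / 2 and |log|P_t(a)| / d - log|a|| is at
   most (log 2) / d <= 1. *)

Lemma geometric_sum_le (R : realFieldType) (q : R) n :
  0 <= q < 1 -> \sum_(i < n) q ^+ i <= (1 - q)^-1.
Proof.
case/andP=> q0 q1; have q1' : 0 < 1 - q by rewrite subr_gt0.
rewrite -(ler_pM2l q1') mulfV ?gt_eqF // -opprB mulNr -subrX1 opprB.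
by rewrite lerBlDr lerDl exprn_ge0.
Qed.

Lemma pow_dominates_pole_bound
    (R : realFieldType) (y K : R) (d m n l : nat) :
  1 <= y -> 0 <= K -> 4 * d%:R * K <= y ^+ n -> (m + n <= l)%N ->
  K * y ^+ m * (2 * d%:R) <= y ^+ l / 2.
Proof.
move=> y1 K0 Kn mnl.
have ym : 0 <= y ^+ m by rewrite exprn_ge0 // (le_trans ler01).
have : y ^+ m * y ^+ n <= y ^+ l by rewrite -exprD ler_weXn2l.
have := ler_wpM2l ym Kn; nra.
Qed.

Lemma exists_pow2_ge (R : archiRealFieldType) (x : R) : exists n, x <= 2 ^+ n.
Proof.
exists (Num.bound `|x|); apply: le_trans (ler_norm x) _.
apply: le_trans (ltW (archi_boundP (normr_ge0 x))) _.
by rewrite -natrX ler_nat ltnW // ltn_expl.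
Qed.

Lemma ln_abs_le1 (R : realType) (r : R) : 2^-1 <= r <= 3/2 -> `|ln r| <= 1.
Proof.
case/andP=> r1 r2; have r0 : 0 < r by lra.
have := @le_ln1Dx R (r - 1) ltac:(lra); rewrite addrC subrK => lnr.
have rV2 : r^-1 <= 2 by rewrite -[2]invrK lef_pV2 ?posrE //; lra.
have rV0 : 0 < r^-1 by rewrite invr_gt0.
have := @le_ln1Dx R (r^-1 - 1) ltac:(lra).
rewrite addrC subrK lnV ?posrE // => lnrV.
by rewrite ler_norml; apply/andP; split; lra.
Qed.

Lemma dist_ln_root_le (R : realType) (A P : R) (d : nat) :
  (0 < d)%N -> 0 < A -> A ^+ d / 2 <= P <= A ^+ d * (3/2) ->
  `|d%:R^-1 * ln P - ln A| <= d%:R^-1.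
Proof.
move=> d0 A0 /andP [P1 P2].
have Ad : 0 < A ^+ d by rewrite exprn_gt0.
have dR : 0 < d%:R :> R by rewrite ltr0n.
set r := P / A ^+ d.
have r12 : 2^-1 <= r <= 3/2.
  by rewrite /r ler_pdivlMr // ler_pdivrMr //; apply/andP; split; lra.
have -> : P = A ^+ d * r by rewrite /r mulrC divfK ?gt_eqF.
have r0 : 0 < r by case/andP: r12; lra.
rewrite lnM ?posrE // lnXn //.
have -> : d%:R^-1 * (ln A *+ d + ln r) - ln A = d%:R^-1 * ln r.
  by rewrite -mulr_natr; field; rewrite gt_eqF.
rewrite normrM ger0_norm ?invr_ge0 ?ler0n //.
by rewrite ler_piMr ?invr_ge0 ?ler0n // ln_abs_le1.
Qed.

Section AbsoluteValue.
Variables (R : realType) (k : fieldType) (abs : k -> R).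
Hypothesis habs : abs_value abs.

Lemma abs_ge0 x : 0 <= abs x. Proof. by case: habs. Qed.

Lemma abs_eq0 x : (abs x == 0) = (x == 0).
Proof. by case: habs => _ H _ _; apply/eqP/eqP => /H. Qed.

Lemma abs0 : abs 0 = 0. Proof. by apply/eqP; rewrite abs_eq0. Qed.

Lemma abs_gt0 x : (0 < abs x) = (x != 0).
Proof. by rewrite lt_def abs_eq0 abs_ge0 andbT. Qed.

Lemma absM x y : abs (x * y) = abs x * abs y. Proof. by case: habs. Qed.

Lemma ler_absD x y : abs (x + y) <= abs x + abs y. Proof. by case: habs. Qed.

Lemma abs1 : abs 1 = 1.
Proof.
have a1 : abs 1 != 0 by rewrite abs_eq0 oner_eq0.
by apply: (mulfI a1); rewrite -absM !mulr1.
Qed.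

Lemma absN x : abs (- x) = abs x.
Proof.
suff absN1 : abs (-1) = 1 by rewrite -mulN1r absM absN1 mul1r.
have : (abs (-1) - 1) * (abs (-1) + 1) = 0.
  by rewrite -subr_sqr expr2 -absM mulrNN mulr1 abs1 expr1n subrr.
have := abs_ge0 (-1); move=> a0 /eqP; rewrite mulf_eq0 => /orP [] /eqP; lra.
Qed.

Lemma absX x n : abs (x ^+ n) = abs x ^+ n.
Proof. by elim: n => [|n IH]; rewrite ?abs1 // !exprS absM IH. Qed.

Lemma absV x : abs (x^-1) = (abs x)^-1.
Proof.
have [->|x0] := eqVneq x 0; first by rewrite invr0 abs0 invr0.
have ax : abs x != 0 by rewrite abs_eq0.
by apply: (mulfI ax); rewrite -absM !mulfV // abs1.
Qed.

Lemma lerB_absD x y : abs x - abs y <= abs (x + y).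
Proof. by have := ler_absD (x + y) (- y); rewrite addrK absN lerBlDr. Qed.

Lemma ler_abs_sum (I : Type) (r : seq I) (P : pred I) (F : I -> k) :
  abs (\sum_(i <- r | P i) F i) <= \sum_(i <- r | P i) abs (F i).
Proof.
elim/big_ind2: _ => [|x1 x2 y1 y2 le1 le2|//]; first by rewrite abs0.
exact: le_trans (ler_absD _ _) (lerD le1 le2).
Qed.

Lemma abs_limit_le u l B :
  converges_to abs u l -> (forall n, abs (u n) <= B) -> abs l <= B.
Proof.
move=> ul uB; apply/ler_addgt0Pr => e e0; have [N HN] := ul e e0.
have := ler_absD (u N) (l - u N); rewrite addrC subrK -[abs (l - _)]absN opprB.
by have := HN N (leqnn N); have := uB N; lra.
Qed.

Lemma analytic_bounded g rho : analytic_D abs g -> 0 <= rho < 1 ->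
  exists2 K, 0 <= K & forall t, abs t <= rho -> abs (g t) <= K.
Proof.
case=> c [cbound conv] /andP [rho0 rho1].
(* On |t| <= rho the terms c_i t^i are dominated by M (rho / r)^i. *)
pose r := (1 + rho) / 2; have [M HM] := cbound r ltac:(rewrite /r; lra).
pose q := rho / r; have r0 : 0 < r by rewrite /r; lra.
have q01 : 0 <= q < 1.
  by rewrite /q ler_pdivlMr ?ltr_pdivrMr // mul0r mul1r rho0 /r; lra.
have M0 : 0 <= M by apply: le_trans (HM 0%N); rewrite mulr_ge0 ?abs_ge0.
have qV : 0 < (1 - q)^-1 by rewrite invr_gt0 subr_gt0; case/andP: q01.
exists (M * (1 - q)^-1) => [|t trho]; first exact: mulr_ge0 M0 (ltW qV).
apply: abs_limit_le (conv t (le_lt_trans trho rho1)) _ => n.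
apply: le_trans (ler_abs_sum _ _ _) _.
apply: le_trans (ler_wpM2l M0 (geometric_sum_le n q01)); rewrite mulr_sumr.
apply: ler_sum => i _; rewrite absM absX.
have -> : M * q ^+ i = M / r ^+ i * rho ^+ i by rewrite expr_div_n mulrA mulrAC.
apply: (@le_trans _ _ (abs (c i) * rho ^+ i)).
  by rewrite ler_wpM2l ?abs_ge0 // lerXn2r ?nnegrE ?abs_ge0.
by rewrite ler_wpM2r ?exprn_ge0 // ler_pdivlMr ?exprn_gt0.
Qed.

Definition pole_bounded (f : k -> k) (rho K : R) (m : nat) : Prop :=
  forall t, 0 < abs t <= rho -> abs (f t) <= K * (abs t)^-1 ^+ m.

Lemma pole_bounded_le f rho K K' m m' : rho <= 1 -> 0 <= K -> K <= K' ->
  (m <= m')%N -> pole_bounded f rho K m -> pole_bounded f rho K' m'.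
Proof.
move=> rho1 K0 KK' mm' fb t /andP [t0 trho]; apply: le_trans (fb t _) _.
  by rewrite t0 trho.
have y1 : 1 <= (abs t)^-1 by rewrite invf_ge1 // (le_trans trho).
by rewrite ler_pM ?exprn_ge0 ?ler_weXn2l // (le_trans ler01).
Qed.

Lemma meromorphic_pole_bounded f rho : meromorphic_D0 abs f -> 0 <= rho < 1 ->
  exists K m, 0 <= K /\ pole_bounded f rho K m.
Proof.
case=> m [g [ga fg]] rho01; have [K K0 gK] := analytic_bounded ga rho01.
exists K, m; split=> // t /andP [t0 trho].
rewrite fg ?t0 ?(le_lt_trans trho) //; last by case/andP: rho01.
by rewrite absM absV absX -exprVn ler_wpM2r ?exprn_ge0 ?invr_ge0 ?abs_ge0 ?gK.
Qed.

Lemma meromorphic_pole_bounded_uniform (f : nat -> k -> k) n rho :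
  (forall i, (1 <= i <= n)%N -> meromorphic_D0 abs (f i)) -> 0 <= rho < 1 ->
  exists K m, 0 <= K /\ forall i, (1 <= i <= n)%N -> pole_bounded (f i) rho K m.
Proof.
move=> fmero rho01; have rho1 : rho <= 1 by case/andP: rho01 => _ /ltW.
elim: n fmero => [|n IH] fmero.
  by exists 0, 0%N; split=> // i /andP [/leq_trans H /H].
have [K1 [m1 [K10 fb1]]] : exists K m, 0 <= K /\
    forall i, (1 <= i <= n)%N -> pole_bounded (f i) rho K m.
  by apply: IH => i /andP [i1 iin]; apply: fmero; rewrite i1 leqW.
have [K2 [m2 [K20 fb2]]] :=
  meromorphic_pole_bounded (fmero n.+1 (leqnn _)) rho01.
exists (K1 + K2), (m1 + m2)%N; split; first by rewrite addr_ge0.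
move=> i /andP [i1]; rewrite leq_eqVlt ltnS => /orP [/eqP -> | iin].
  by apply: pole_bounded_le fb2; rewrite ?lerDr ?leq_addl.
by apply: pole_bounded_le (fb1 i _); rewrite ?lerDl ?leq_addr ?i1.
Qed.

Lemma abs_mul1D_ge z x : abs x <= 2^-1 -> abs z / 2 <= abs (z * (1 + x)).
Proof.
move=> x2; rewrite absM ler_wpM2l ?abs_ge0 //.
by have := lerB_absD 1 x; rewrite abs1; lra.
Qed.

Lemma abs_lower_terms_le (a : k) (c : nat -> k) (d : nat) :
  (0 < d)%N -> 1 <= abs a ->
  (forall i, (1 <= i <= d)%N -> abs (c i) * (2 * d%:R) <= abs a) ->
  abs (\sum_(1 <= i < d.+1) c i * a ^+ (d - i)) <= abs a ^+ d / 2.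
Proof.
move=> d0 a1 cb; have dR : 0 < d%:R :> R by rewrite ltr0n.
have sum_eq : \sum_(1 <= i < d.+1) abs a ^+ d / (2 * d%:R) = abs a ^+ d / 2.
  by rewrite sumr_const_nat subn1 -mulr_natr; field; rewrite gt_eqF.
rewrite -sum_eq; apply: le_trans (ler_abs_sum _ _ _) _.
rewrite big_nat_cond [X in _ <= X]big_nat_cond; apply: ler_sum => i.
rewrite andbT => /andP [i1 id]; rewrite absM absX ler_pdivlMr ?mulr_gt0 //.
have aa : abs a * abs a ^+ (d - i) <= abs a ^+ d.
  by rewrite -exprS ler_weXn2l // ltn_subrL i1 d0.
apply: le_trans aa; rewrite mulrAC ler_wpM2r ?exprn_ge0 ?abs_ge0 //.
by rewrite cb ?i1.
Qed.

Lemma dist_ln_abs_monic_le (a s : k) (d : nat) : (0 < d)%N -> a != 0 ->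
  abs s <= abs a ^+ d / 2 ->
  a ^+ d + s != 0 /\ `|d%:R^-1 * ln (abs (a ^+ d + s)) - ln (abs a)| <= d%:R^-1.
Proof.
move=> d0 a0 sa; have A0 : 0 < abs a by rewrite abs_gt0.
have Ad : 0 < abs a ^+ d by rewrite exprn_gt0.
have P1 : abs a ^+ d / 2 <= abs (a ^+ d + s).
  by have := lerB_absD (a ^+ d) s; rewrite absX; lra.
have P2 : abs (a ^+ d + s) <= abs a ^+ d * (3/2).
  by have := ler_absD (a ^+ d) s; rewrite absX; lra.
split; first by rewrite -abs_gt0; lra.
by apply: dist_ln_root_le; rewrite ?P1.
Qed.

End AbsoluteValue.

Theorem lemma2p1 (R : realType) (k : closedFieldType) (abs : k -> R)
  (habs : abs_value abs) (hcomp : complete_abs abs)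
  (d : nat) (hd : (2 <= d)%N) (alpha : nat -> k -> k)
  (halpha : forall i, (1 <= i <= d)%N -> meromorphic_D0 abs (alpha i)) :
  exists C : R, 0 < C /\ exists N : nat, (1 <= N)%N /\
    forall (l : nat) (h : k -> k), (N <= l)%N ->
      analytic_D abs h -> h 0 = 0 -> (forall t, abs t < 1 -> abs (h t) <= 2^-1) ->
      forall t : k, 0 < abs t <= 2^-1 ->
        let a := t ^- l * (1 + h t) in
        let Pa := a ^+ d + \sum_(1 <= i < d.+1) alpha i t * a ^+ (d - i) in
        Pa != 0 /\ `| d%:R^-1 * ln (abs Pa) - ln (abs a) | <= C.
Proof.
have [K [m [K0 alphaK]]] :=
  meromorphic_pole_bounded_uniform habs halpha (rho := 2^-1) ltac:(lra).
have [n Kn] := exists_pow2_ge (4 * d%:R * K).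
have d0 : (0 < d)%N by apply: ltnW.
exists 1; split => //; exists (m + n).+1; split => // l h ml _ _ hsmall t.
case/andP=> t0 t2 a Pa.
have y2 : 2 <= (abs t)^-1 by rewrite -[2]invrK lef_pV2 ?posrE //; lra.
have ay : (abs t)^-1 ^+ l / 2 <= abs a.
  by rewrite -(absV habs) -(absX habs) exprVn abs_mul1D_ge // hsmall //; lra.
have a1 : 1 <= abs a.
  apply: le_trans ay; rewrite ler_pdivlMr // mul1r.
  have y1 : 1 <= (abs t)^-1 by lra.
  apply: le_trans y2 _; rewrite -{1}(expr1 (abs t)^-1).
  by rewrite ler_weXn2l // (leq_trans _ ml).
have coef i : (1 <= i <= d)%N -> abs (alpha i t) * (2 * d%:R) <= abs a.
  move=> id; apply: le_trans ay.
  apply: (@le_trans _ _ (K * (abs t)^-1 ^+ m * (2 * d%:R))).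
    by rewrite ler_wpM2r ?mulr_ge0 ?ler0n ?alphaK ?t0.
  apply: (pow_dominates_pole_bound (n := n)) => //; first lra; last exact: ltnW.
  by apply: le_trans Kn _; apply: lerXn2r; rewrite ?nnegrE; lra.
have a0 : a != 0 by rewrite -(abs_gt0 habs); lra.
have [Pa0 close] :=
  dist_ln_abs_monic_le habs d0 a0 (abs_lower_terms_le habs d0 a1 coef).
split => //; apply: le_trans close _.
by rewrite invf_le1 ?ler1n ?ltr0n // ltnW.
Qed.
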